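(* Let $I$ be a squarefree monomial ideal of $Q=\Bbbk[x_1,\ldots,x_n]$ and $\mathbb{T}$ the Taylor resolution of $Q/I$ with Gemeda's dg algebra structure. For a variable $x_k$, let $\mathbb{I}_k$ be the subcomplex of $\mathbb{T}$ spanned by the elements $e_V$ and $\partial(e_V)$ for all $V\subseteq G(I)$ such that $V$ contains a monomial divisible by $x_k$. Then $\mathbb{I}_k$ is a dg ideal of $\mathbb{T}$. Moreover, for any set of variables $x_{k_1},\ldots,x_{k_\ell}$, the subcomplex $\mathbb{I}$ spanned by all $e_V$ and $\partial(e_V)$ with $e_V\in\mathbb{I}_{k_r}$ for some $r$ is a dg ideal of $\mathbb{T}$.
   Context: $G(I)$ is the set of minimal monomial generators of $I$ with a fixed total order $<$; $m_U=\mathrm{lcm}(U)$. The Taylor resolution $\mathbb{T}$ has basis $e_U$ ($U\subseteq G(I)$) in degree $|U|$, differential $\partial(e_U)=\sum_{u\in U}(-1)^{|\{v\in U:v<u\}|}\frac{m_U}{m_{U\setminus\{u\}}}e_{U\setminus\{u\}}$, and Gemeda product $e_Ve_W=(-1)^{|\{(v,w)\in V\times W:v>w\}|}\frac{m_Vm_W}{m_{V\cup W}}e_{V\cup W}$ if $V\cap W=\emptyset$, $0$ otherwise. A subcomplex $\mathbb{J}$ of a dg algebra $\mathbb{F}$ is a dg ideal if $\mathbb{F}\mathbb{J}\subseteq\mathbb{J}$. *)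

From HB Require Import structures.
From mathcomp Require Import all_boot all_algebra.
From mathcomp Require Import mpoly.
Set Implicit Arguments. Unset Strict Implicit. Unset Printing Implicit Defensive.
Import GRing.Theory.
Local Open Scope ring_scope.

(* A squarefree monomial of Q = k[x_0..x_{n-1}] is identified with its support
   S : {set 'I_n}; mono S = prod_{i in S} x_i.
   G(I) = {g 0, ..., g (m-1)}, totally ordered by the index order of 'I_m. *)
Section Taylor.
Variables (k : fieldType) (n m : nat) (g : 'I_m -> {set 'I_n}).

Definition mono (S : {set 'I_n}) : {mpoly k[n]} := \prod_(i in S) 'X_i.

(* support of m_U = lcm(U) *)
Definition cover (U : {set 'I_m}) : {set 'I_n} := \bigcup_(u in U) g u.

(* The Taylor complex: free Q-module on e_U, U subset of G(I). *)
Definition TT := {ffun {set 'I_m} -> {mpoly k[n]}}.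

Definition tbasis (U : {set 'I_m}) : TT := [ffun W => (W == U)%:R].
Definition tscale (c : {mpoly k[n]}) (x : TT) : TT := [ffun W => c * x W].

(* m_U / m_{U \ u} = prod of x_i, i in cover U \ cover (U \ u)  (squarefree) *)
Definition dbasis (U : {set 'I_m}) : TT :=
  \sum_(u in U) tscale ((-1) ^+ #|[set v in U | (v < u)%N]|
                         * mono (cover U :\: cover (U :\ u))) (tbasis (U :\ u)).

Definition tdiff (x : TT) : TT := \sum_U tscale (x U) (dbasis U).

(* Gemeda product on basis: m_V m_W / m_{V u W} = prod of x_i, i in cover V cap cover W *)
Definition bmul (V W : {set 'I_m}) : TT :=
  if [disjoint V & W] then
    tscale ((-1) ^+ #|[set p in setX V W | (p.2 < p.1)%N]|
             * mono (cover V :&: cover W)) (tbasis (V :|: W))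
  else 0.

Definition tmul (x y : TT) : TT := \sum_V \sum_W tscale (x V * y W) (bmul V W).

Definition in_span (P : {set 'I_m} -> Prop) (x : TT) : Prop :=
  exists a b : {set 'I_m} -> {mpoly k[n]},
    (forall V, ~ P V -> a V = 0 /\ b V = 0) /\
    x = \sum_V (tscale (a V) (tbasis V) + tscale (b V) (dbasis V)).

Definition Ik (kk : 'I_n) : TT -> Prop :=
  in_span (fun V => exists2 v, v \in V & kk \in g v).

Definition dg_ideal (J : TT -> Prop) : Prop :=
  [/\ J 0,
      (forall x y, J x -> J y -> J (x + y)),
      (forall c x, J x -> J (tscale c x)),
      (forall x, J x -> J (tdiff x)) &
      (forall t x, J x -> J (tmul t x))].

End Taylor.

From Pilot Require Import Defs.
From HB Require Import structures.
From mathcomp Require Import all_boot all_algebra.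
From mathcomp Require Import mpoly.
From mathcomp Require Import zify.
From Stdlib Require Import Classical.

(* Let P be a family of subsets of G(I) closed under taking supersets.  The
   Q-span of the e_V and d(e_V) with V in P is a dg ideal.  It is stable under d
   because d o d = 0.  It is stable under multiplication because e_W e_V is a
   monomial multiple of e_(W u V), and e_W d(e_V) is, when W and V are disjoint,
   +-(d(e_W e_V) - d(e_W) e_V) by the Leibniz rule, and otherwise a combination of
   the products e_W e_(V - v), whose nonzero ones have W u (V - v) containing V.
   The sets V with a generator divisible by x_k are closed under supersets, which
   gives the first claim.  For the second, e_V lies in I_k only if V contains such
   a generator: otherwise, for every U that does, the coefficient of e_V in d(e_U)
   is divisible by x_k, so evaluating at x = 0 the e_V-coordinate of an element
   of I_k gives 0. *)

Set Implicit Arguments. Unset Strict Implicit. Unset Printing Implicit Defensive.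
Import GRing.Theory.
Local Open Scope ring_scope.

Section TaylorAlgebra.
Variables (k : fieldType) (n m : nat) (g : 'I_m -> {set 'I_n}).
Implicit Types (U V W : {set 'I_m}) (u v w : 'I_m).
Local Notation R := {mpoly k[n]}.
Local Notation T := (TT k n m).
Local Notation mono := (Defs.mono k).
Local Notation cover := (Defs.cover g).
Local Notation tbasis := (tbasis k n).
Local Notation dbasis := (dbasis k g).
Local Notation bmul := (bmul k g).
Local Notation tdiff := (@tdiff k n m g).
Local Notation tmul := (@tmul k n m g).
Local Notation in_span := (@in_span k n m g).

Lemma tscale_is_zmod_morphism c : zmod_morphism (@tscale k n m c).
Proof. by move=> x y; apply/ffunP => W; rewrite !ffunE mulrBr. Qed.
HB.instance Definition _ c := Algebra.isZmodMorphism.Build T T (tscale c)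
  (tscale_is_zmod_morphism c).

Lemma tscaleDl c d (x : T) : tscale (c + d) x = tscale c x + tscale d x.
Proof. by apply/ffunP => W; rewrite !ffunE mulrDl. Qed.

Lemma tscaleNl c (x : T) : tscale (- c) x = - tscale c x.
Proof. by apply/ffunP => W; rewrite !ffunE mulNr. Qed.

Lemma tscale0l (x : T) : tscale 0 x = 0.
Proof. by apply/ffunP => W; rewrite !ffunE mul0r. Qed.

Lemma tscale1 (x : T) : tscale 1 x = x.
Proof. by apply/ffunP => W; rewrite !ffunE mul1r. Qed.

Lemma tscaleA c d (x : T) : tscale c (tscale d x) = tscale (c * d) x.
Proof. by apply/ffunP => W; rewrite !ffunE mulrA. Qed.

Lemma tdiff_is_zmod_morphism : zmod_morphism tdiff.
Proof.
by move=> x y; rewrite /tdiff -sumrB; apply: eq_bigr => U _; rewrite !ffunE tscaleDl tscaleNl.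
Qed.
HB.instance Definition _ := Algebra.isZmodMorphism.Build T T tdiff tdiff_is_zmod_morphism.

Lemma tdiffZ c x : tdiff (tscale c x) = tscale c (tdiff x).
Proof. by rewrite /tdiff raddf_sum /=; apply: eq_bigr => U _; rewrite ffunE tscaleA. Qed.

Lemma tdiff_basis V : tdiff (tbasis V) = dbasis V.
Proof.
rewrite /tdiff (bigD1 V) //= big1 ?addr0; first by rewrite ffunE eqxx tscale1.
by move=> U /negPf UV; rewrite ffunE UV tscale0l.
Qed.

Lemma tmul_is_zmod_morphism t : zmod_morphism (tmul t).
Proof.
move=> x y; rewrite /tmul -sumrB; apply: eq_bigr => V _; rewrite -sumrB.
by apply: eq_bigr => W _; rewrite !ffunE mulrBr tscaleDl tscaleNl.
Qed.
HB.instance Definition _ t := Algebra.isZmodMorphism.Build T T (tmul t)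
  (tmul_is_zmod_morphism t).

Lemma tmulZr t c x : tmul t (tscale c x) = tscale c (tmul t x).
Proof.
rewrite /tmul raddf_sum /=; apply: eq_bigr => V _; rewrite raddf_sum /=; apply: eq_bigr => W _.
by rewrite ffunE tscaleA mulrCA.
Qed.

Lemma tmul_basisl W x : tmul (tbasis W) x = \sum_V tscale (x V) (bmul W V).
Proof.
rewrite /tmul (bigD1 W) //= [X in _ + X]big1 ?addr0.
  by apply: eq_bigr => V _; rewrite ffunE eqxx mul1r.
by move=> U /negPf UW; rewrite big1 // => V _; rewrite !ffunE UW mul0r tscale0l.
Qed.

Lemma tmul_basis W V : tmul (tbasis W) (tbasis V) = bmul W V.
Proof.
rewrite tmul_basisl (bigD1 V) //= big1 ?addr0; first by rewrite ffunE eqxx tscale1.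
by move=> U /negPf UV; rewrite ffunE UV tscale0l.
Qed.

Lemma tmulDl x y z : tmul (x + y) z = tmul x z + tmul y z.
Proof.
rewrite /tmul -big_split; apply: eq_bigr => V _; rewrite -big_split.
by apply: eq_bigr => W _; rewrite !ffunE mulrDl tscaleDl.
Qed.

Lemma tmul0l z : tmul 0 z = 0.
Proof. by rewrite /tmul big1 // => V _; rewrite big1 // => W _; rewrite !ffunE mul0r tscale0l. Qed.

Lemma tmul_suml (I : Type) (r : seq I) (P : pred I) (F : I -> T) z :
  tmul (\sum_(i <- r | P i) F i) z = \sum_(i <- r | P i) tmul (F i) z.
Proof. exact: (big_morph (tmul^~ z) (fun x y => tmulDl x y z) (tmul0l z)). Qed.

Lemma tmulZl c x y : tmul (tscale c x) y = tscale c (tmul x y).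
Proof.
rewrite /tmul raddf_sum /=; apply: eq_bigr => V _; rewrite raddf_sum /=; apply: eq_bigr => W _.
by rewrite ffunE tscaleA mulrA.
Qed.

Lemma tbasis_expand (x : T) : x = \sum_W tscale (x W) (tbasis W).
Proof.
apply/ffunP => U; rewrite sum_ffunE (bigD1 U) //= big1 ?addr0.
  by rewrite !ffunE eqxx mulr1.
by move=> W /negPf WU; rewrite !ffunE eq_sym WU mulr0.
Qed.

Section Span.
Variable P : {set 'I_m} -> Prop.
Local Notation span := (in_span P).

Lemma span0 : span 0.
Proof.
exists (fun _ => 0), (fun _ => 0); split => //.
by rewrite big1 // => V _; rewrite !tscale0l addr0.
Qed.

Lemma spanD x y : span x -> span y -> span (x + y).
Proof.
move=> [a1 [b1 [H1 ->]]] [a2 [b2 [H2 ->]]].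
exists (fun V => a1 V + a2 V), (fun V => b1 V + b2 V); split.
  by move=> V nPV; have [-> ->] := H1 V nPV; have [-> ->] := H2 V nPV; rewrite addr0.
by rewrite -big_split; apply: eq_bigr => V _; rewrite /= !tscaleDl addrACA.
Qed.

Lemma spanZ c x : span x -> span (tscale c x).
Proof.
move=> [a [b [H ->]]]; exists (fun V => c * a V), (fun V => c * b V); split.
  by move=> V nPV; have [-> ->] := H V nPV; rewrite mulr0.
by rewrite raddf_sum; apply: eq_bigr => V _; rewrite /= raddfD /= !tscaleA.
Qed.

Lemma spanB x y : span x -> span y -> span (x - y).
Proof.
move=> Sx Sy; apply: spanD Sx _.
by rewrite -[y]tscale1 -tscaleNl; apply: spanZ.
Qed.

Lemma span_sum (I : Type) (r : seq I) (Q : pred I) (F : I -> T) :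
  (forall i, Q i -> span (F i)) -> span (\sum_(i <- r | Q i) F i).
Proof. by move=> SF; apply: big_ind => //; [exact: span0 | exact: spanD]. Qed.

Lemma span_basis V : P V -> span (tbasis V).
Proof.
move=> PV; exists (fun W => (W == V)%:R), (fun _ => 0); split.
  by move=> W nPW; split => //; case: eqP => // WV; rewrite WV in nPW.
rewrite (bigD1 V) //= [X in _ + X]big1 ?addr0; first by rewrite eqxx tscale1 tscale0l addr0.
by move=> W /negPf ->; rewrite !tscale0l addr0.
Qed.

End Span.

Definition nbelow U x : nat := #|[set v in U | (v < x)%N]|.
Definition ninv V W : nat := #|[set p in setX V W | (p.2 < p.1)%N]|.
Definition dcoef U u : R := (-1) ^+ nbelow U u * mono (cover U :\: cover (U :\ u)).
Definition bcoef V W : R := (-1) ^+ ninv V W * mono (cover V :&: cover W).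

Lemma dbasisE U : dbasis U = \sum_(u in U) tscale (dcoef U u) (tbasis (U :\ u)).
Proof. by []. Qed.

Lemma bmulE V W :
  bmul V W = if [disjoint V & W] then tscale (bcoef V W) (tbasis (V :|: W)) else 0.
Proof. by []. Qed.

Lemma tmul_basis_dbasisE W V :
  tmul (tbasis W) (dbasis V) = \sum_(v in V) tscale (dcoef V v) (bmul W (V :\ v)).
Proof. by rewrite dbasisE raddf_sum; apply: eq_bigr => v _; rewrite /= tmulZr tmul_basis. Qed.

Lemma tmul_dbasis_basisE W V :
  tmul (dbasis W) (tbasis V) = \sum_(w in W) tscale (dcoef W w) (bmul (W :\ w) V).
Proof. by rewrite dbasisE tmul_suml; apply: eq_bigr => w _; rewrite tmulZl tmul_basis. Qed.

Lemma monoU (A B : {set 'I_n}) : [disjoint A & B] -> mono (A :|: B) = mono A * mono B.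
Proof. by move=> dAB; rewrite /Defs.mono -bigU //; apply: eq_bigl => i; rewrite !inE. Qed.

Lemma mono_mul_eq (A B C D : {set 'I_n}) :
  A :&: B = set0 -> C :&: D = set0 -> A :|: B = C :|: D ->
  mono A * mono B = mono C * mono D.
Proof. by move=> /eqP dAB /eqP dCD eqU; rewrite -!monoU -?setI_eq0 // eqU. Qed.

Lemma coverU V W : cover (V :|: W) = cover V :|: cover W.
Proof. exact: bigcup_setU. Qed.

Lemma coverD1 U u : u \in U -> cover U = g u :|: cover (U :\ u).
Proof. by move=> uU; rewrite -{1}(setD1K uU) coverU /Defs.cover big_set1. Qed.

Lemma coverS V W : V \subset W -> cover V \subset cover W.
Proof.
move=> sVW; apply/subsetP => i /bigcupP [u uV iu]; apply/bigcupP.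
by exists u; first exact: (subsetP sVW).
Qed.

Lemma signr_congr (a b c : nat) : b = (a + (c + c))%N -> (-1) ^+ a = (-1) ^+ b :> R.
Proof. by move=> ->; rewrite exprD addnn -mul2n exprM sqrrN !expr1n mulr1. Qed.

Lemma nbelowD1_above V u w : (w < u)%N -> nbelow (V :\ u) w = nbelow V w.
Proof.
move=> wu; apply: eq_card => v; rewrite !inE.
by case: (eqVneq v u) => [->|] //=; rewrite ltnNge ltnW ?andbF.
Qed.

Lemma nbelowD1_below V u w : w \in V -> (w < u)%N -> (nbelow (V :\ w) u).+1 = nbelow V u.
Proof.
move=> wV wu; rewrite /nbelow [RHS](cardsD1 w) !inE wV wu add1n.
by congr _.+1; apply: eq_card => v; rewrite !inE andbA.
Qed.

Lemma dcoefM V u w : u \in V -> w \in V :\ u ->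
  dcoef V u * dcoef (V :\ u) w =
  (-1) ^+ (nbelow V u + nbelow (V :\ u) w) * mono (cover V :\: cover (V :\ u :\ w)).
Proof.
move=> uV wVu; rewrite /dcoef mulrACA -exprD -monoU; last first.
  by rewrite -setI_eq0; apply/eqP/setP => i; rewrite !inE; case: (i \in cover (V :\ u)); rewrite ?andbF.
have sVu : cover (V :\ u) \subset cover V by apply/coverS/subD1set.
have sVuw : cover (V :\ u :\ w) \subset cover (V :\ u) by apply/coverS/subD1set.
congr (_ * mono _); apply/setP => i; rewrite !inE.
case iVuw: (i \in cover (V :\ u :\ w)); first by rewrite (subsetP sVuw) //= andbF.
by case iVu: (i \in cover (V :\ u)); rewrite /= ?orbF // (subsetP sVu).
Qed.

Lemma sign_swap V u w : u \in V -> w \in V -> u != w ->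
  (-1) ^+ (nbelow V u + nbelow (V :\ u) w) = - (-1) ^+ (nbelow V w + nbelow (V :\ w) u) :> R.
Proof.
move=> uV wV uw.
have [wu|uw'|e] := ltngtP w u; last by move: uw; rewrite (val_inj e) eqxx.
  by rewrite nbelowD1_above // -(nbelowD1_below wV wu) addSn exprS mulN1r addnC.
by rewrite [in RHS]nbelowD1_above // -(nbelowD1_below uV uw') addSn exprS mulN1r opprK addnC.
Qed.

Lemma sum_pairs_antisym (Z : zmodType) V (f : 'I_m -> 'I_m -> Z) :
  (forall u w, u \in V -> w \in V -> u != w -> f u w = - f w u) ->
  \sum_(u in V) \sum_(w in V :\ u) f u w = 0.
Proof.
move=> f_anti; rewrite pair_big_dep /= (bigID (fun p : 'I_m * 'I_m => (p.2 < p.1)%N)) /=.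
rewrite [X in _ + X](reindex_inj (h := fun p : 'I_m * 'I_m => (p.2, p.1))); last first.
  by move=> [a b] [c d] /= [-> ->].
rewrite [X in _ + X](eq_bigl (fun p : 'I_m * 'I_m =>
  (p.1 \in V) && (p.2 \in V :\ p.1) && (p.2 < p.1)%N)); last first.
  move=> [u w] /=; rewrite !inE.
  case: (eqVneq w u) => [->|wu]; first by rewrite !andbF.
  have [uw|wu'|e] := ltngtP u w; last by move: wu; rewrite (val_inj e) eqxx.
    by case: (u \in V); case: (w \in V).
  by case: (u \in V); case: (w \in V).
rewrite -big_split big1 //= => [[u w]] /=; rewrite !inE => /andP [/andP [uV /andP [wu wV]] _].
by rewrite (f_anti u w) ?addNr // eq_sym.
Qed.

Lemma tdiff_dbasis V : tdiff (dbasis V) = 0.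
Proof.
rewrite dbasisE raddf_sum /=.
under eq_bigr => u _ do rewrite tdiffZ tdiff_basis dbasisE raddf_sum /=.
under eq_bigr => u _ do under eq_bigr => w _ do rewrite tscaleA.
apply: sum_pairs_antisym => u w uV wV uw.
have wVu : w \in V :\ u by rewrite !inE eq_sym uw wV.
have uVw : u \in V :\ w by rewrite !inE uw uV.
rewrite !dcoefM //.
have -> : V :\ w :\ u = V :\ u :\ w by apply/setP => x; rewrite !inE andbCA.
by rewrite sign_swap // mulNr tscaleNl.
Qed.

Lemma big_setU_disjoint (Z : Type) (idx : Z) (op : Monoid.com_law idx) (F : 'I_m -> Z) W V :
  [disjoint W & V] ->
  \big[op/idx]_(u in W :|: V) F u = op (\big[op/idx]_(u in W) F u) (\big[op/idx]_(u in V) F u).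
Proof. by move=> dWV; rewrite -bigU //; apply: eq_bigl => u; rewrite !inE. Qed.

Lemma card_set_sum (A : {set 'I_m}) (Q : pred 'I_m) :
  #|[set y in A | Q y]| = (\sum_(y in A) Q y)%N.
Proof.
rewrite -sum1_card (eq_bigl (fun y => (y \in A) && Q y)); last by move=> y; rewrite inE.
by rewrite big_mkcondr /=; apply: eq_bigr => y _; case: (Q y).
Qed.

Lemma ninvE W V : ninv W V = (\sum_(w in W) nbelow V w)%N.
Proof.
rewrite /ninv -sum1_card (eq_bigl (fun p : 'I_m * 'I_m =>
  (p.1 \in W) && ((p.2 \in V) && (p.2 < p.1)%N))); last by move=> [a b]; rewrite !inE andbA.
rewrite -(pair_big_dep (fun a => a \in W) (fun a b => (b \in V) && (b < a)%N) (fun _ _ => 1%N)) /=.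
apply: eq_bigr => w _; rewrite /nbelow card_set_sum big_mkcondr.
by apply: eq_bigr => x _; case: (x < w)%N.
Qed.

Lemma nbelowU W V x : [disjoint W & V] -> nbelow (W :|: V) x = (nbelow W x + nbelow V x)%N.
Proof. by move=> dWV; rewrite /nbelow !card_set_sum big_setU_disjoint. Qed.

Lemma ninvD1l W V w : w \in W -> ninv W V = (ninv (W :\ w) V + nbelow V w)%N.
Proof. by move=> wW; rewrite !ninvE (big_setD1 w wW) /= addnC. Qed.

Lemma ninvD1r W V v : v \in V ->
  ninv W V = (ninv W (V :\ v) + \sum_(w in W) (v < w))%N.
Proof.
move=> vV; rewrite !ninvE -big_split /=; apply: eq_bigr => w _.
by rewrite /nbelow !card_set_sum (big_setD1 v vV) /= addnC.
Qed.

Lemma nbelow_add_above W v : v \notin W -> (nbelow W v + \sum_(w in W) (v < w))%N = #|W|.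
Proof.
move=> vW; rewrite /nbelow card_set_sum -big_split -sum1_card /=; apply: eq_bigr => w wW.
have wv : w != v by apply: contraNneq vW => <-.
by case: (ltngtP w v) => // e; move: wv; rewrite (val_inj e) eqxx.
Qed.

Lemma setD1Ul W V w : w \notin V -> (W :|: V) :\ w = (W :\ w) :|: V.
Proof. by move=> wV; apply/setP => x; rewrite !inE; case: eqVneq => [->|] //=; rewrite (negPf wV). Qed.

Lemma setD1Ur W V v : v \notin W -> (W :|: V) :\ v = W :|: (V :\ v).
Proof. by move=> vW; apply/setP => x; rewrite !inE; case: eqVneq => [->|] //=; rewrite (negPf vW). Qed.

Lemma dcoef_bcoef_left W V w : [disjoint W & V] -> w \in W ->
  dcoef W w * bcoef (W :\ w) V = bcoef W V * dcoef (W :|: V) w.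
Proof.
move=> dWV wW; rewrite /dcoef /bcoef setD1Ul ?(negbT (disjointFr dWV wW)) //.
rewrite mulrACA [RHS]mulrACA -!exprD; congr (_ * _).
  apply: (@signr_congr _ _ (nbelow V w)).
  by rewrite (ninvD1l _ wW) (nbelowU _ dWV); lia.
rewrite !coverU (coverD1 wW); apply: mono_mul_eq.
all: apply/setP => x; rewrite !inE.
all: by case: (x \in g w); case: (x \in cover (W :\ w)); case: (x \in cover V).
Qed.

Lemma dcoef_bcoef_right W V v : [disjoint W & V] -> v \in V ->
  dcoef V v * bcoef W (V :\ v) = (-1) ^+ #|W| * (bcoef W V * dcoef (W :|: V) v).
Proof.
move=> dWV vV; have vW := negbT (disjointFl dWV vV).
rewrite /dcoef /bcoef setD1Ur //.
rewrite mulrACA [X in _ = _ * X]mulrACA [RHS]mulrA -!exprD; congr (_ * _).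
  apply: (@signr_congr _ _ #|W|).
  by rewrite (ninvD1r _ vV) (nbelowU _ dWV) -(nbelow_add_above vW); lia.
rewrite !coverU (coverD1 vV); apply: mono_mul_eq.
all: apply/setP => x; rewrite !inE.
all: by case: (x \in g v); case: (x \in cover (V :\ v)); case: (x \in cover W).
Qed.

Lemma tmul_basis_dbasis W V : [disjoint W & V] ->
  tmul (tbasis W) (dbasis V) =
  tscale ((-1) ^+ #|W|) (tdiff (bmul W V) - tmul (dbasis W) (tbasis V)).
Proof.
move=> dWV.
have dW'V w : [disjoint W :\ w & V] by apply: disjointWl dWV; apply: subD1set.
have dWV' v : [disjoint W & V :\ v] by apply: disjointWr dWV; apply: subD1set.
have mulW : \sum_(w in W) tscale (dcoef W w) (bmul (W :\ w) V) =
    tscale (bcoef W V) (\sum_(w in W) tscale (dcoef (W :|: V) w) (tbasis ((W :|: V) :\ w))).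
  rewrite raddf_sum /=; apply: eq_bigr => w wW.
  by rewrite bmulE dW'V !tscaleA dcoef_bcoef_left // setD1Ul ?(negbT (disjointFr dWV wW)).
rewrite tmul_basis_dbasisE tmul_dbasis_basisE mulW bmulE dWV tdiffZ tdiff_basis dbasisE.
rewrite big_setU_disjoint // [tscale (bcoef W V) _]raddfD /= [X in X - _]addrC addrK.
rewrite !raddf_sum /=; apply: eq_bigr => v vV.
by rewrite bmulE dWV' !tscaleA -mulrA dcoef_bcoef_right // setD1Ur ?(negbT (disjointFl dWV vV)).
Qed.

Section UpwardClosed.
Variable P : {set 'I_m} -> Prop.
Hypothesis P_up : forall V W, V \subset W -> P V -> P W.
Local Notation span := (in_span P).

Lemma span_tdiff x : span x -> span (tdiff x).
Proof.
move=> [a [b [Hab ->]]]; exists (fun _ => 0), a; split; first by move=> V /Hab [-> _].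
rewrite raddf_sum /=; apply: eq_bigr => V _.
by rewrite raddfD /= !tdiffZ tdiff_basis tdiff_dbasis raddf0 tscale0l add0r addr0.
Qed.

Lemma span_bmul W V : P (W :|: V) -> span (bmul W V).
Proof. by move=> PWV; rewrite bmulE; case: ifP => _; [apply/spanZ/span_basis | apply: span0]. Qed.

Lemma span_tmul_basis_dbasis W V : P V -> span (tmul (tbasis W) (dbasis V)).
Proof.
move=> PV; have [dWV|ndWV] := boolP [disjoint W & V].
  rewrite tmul_basis_dbasis //; apply/spanZ/spanB.
    exact/span_tdiff/span_bmul/(P_up (subsetUr W V)).
  rewrite tmul_dbasis_basisE; apply: span_sum => w _; apply/spanZ/span_bmul.
  exact: P_up (subsetUr _ _) PV.
rewrite tmul_basis_dbasisE; apply: span_sum => v vV; apply: spanZ.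
rewrite bmulE; case: ifP => [dWV'|_]; last exact: span0.
(* W meets V, but not V :\ v, hence in v. *)
have vW : v \in W.
  move: ndWV; rewrite -setI_eq0 => /set0Pn [x]; rewrite inE => /andP [xW xV].
  by move: (disjointFr dWV' xW); rewrite !inE xV andbT => /negbFE /eqP <-.
apply/spanZ/span_basis/(P_up _ PV); apply/subsetP => x xV; rewrite !inE.
by case: eqVneq => [->|]; rewrite ?vW ?xV ?orbT.
Qed.

Lemma span_tmul t x : span x -> span (tmul t x).
Proof.
move=> [a [b [Hab ->]]]; rewrite raddf_sum; apply: span_sum => V _; rewrite /= raddfD /= !tmulZr.
have [PV|nPV] := classic (P V); last first.
  by have [-> ->] := Hab V nPV; rewrite !tscale0l addr0; apply: span0.
rewrite (tbasis_expand t) !tmul_suml.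
apply: spanD; apply: spanZ; apply: span_sum => W _; rewrite tmulZl; apply: spanZ.
  by rewrite tmul_basis; apply/span_bmul/(P_up (subsetUr W V)).
exact: span_tmul_basis_dbasis.
Qed.

Lemma span_dg_ideal : dg_ideal g span.
Proof. by split; [apply: span0 | apply: spanD | apply: spanZ | apply: span_tdiff | apply: span_tmul]. Qed.

End UpwardClosed.

Lemma meval0_mono (A : {set 'I_n}) i : i \in A -> meval (fun _ => 0 : k) (mono A) = 0.
Proof. by move=> iA; rewrite /Defs.mono rmorph_prod (bigD1 i) //= mevalXU mul0r. Qed.

Lemma meval0_dbasis i W V :
  i \in cover W -> i \notin cover V -> meval (fun _ => 0 : k) (dbasis W V) = 0.
Proof.
move=> iW iV; rewrite dbasisE sum_ffunE raddf_sum big1 // => u uW.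
rewrite /= !ffunE; have [VWu|_] := eqVneq V (W :\ u); last by rewrite mulr0n mulr0 meval0.
by rewrite mulr1n mulr1 /dcoef rmorphM /= (@meval0_mono _ i) ?mulr0 // inE iW -VWu iV.
Qed.

Lemma Ik_basis_divisible kk V : Ik g kk (tbasis V) -> exists2 v, v \in V & kk \in g v.
Proof.
have [/bigcupP //|kV [a [b [Hab E]]]] := boolP (kk \in cover V).
have := congr1 (fun x : T => meval (fun _ => 0 : k) (x V)) E.
rewrite ffunE eqxx meval1 sum_ffunE raddf_sum /= big1 => [/eqP|W _]; first by rewrite oner_eq0.
rewrite !ffunE raddfD /= !rmorphM /=.
have [kW|kW] := boolP (kk \in cover W).
  rewrite (meval0_dbasis kW kV) mulr0 addr0.
  have [VW|_] := eqVneq V W; last by rewrite mulr0n meval0 mulr0.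
  by move: kV; rewrite VW kW.
have nPW : ~ exists2 v, v \in W & kk \in g v by move=> /bigcupP; apply/negP.
by have [-> ->] := Hab W nPW; rewrite !meval0 !mul0r addr0.
Qed.

End TaylorAlgebra.

Theorem mainTheorem12 (k : fieldType) (n m : nat) (g : 'I_m -> {set 'I_n})
  (Hmin : forall i j : 'I_m, g i \subset g j -> i = j) :
  (forall kk : 'I_n, @dg_ideal k n m g (@Ik k n m g kk)) /\
  (forall K : {set 'I_n},
     @dg_ideal k n m g (@in_span k n m g
       (fun V => exists2 kk, kk \in K & @Ik k n m g kk (@tbasis k n m V)))).
Proof.
have Ik_up kk (V W : {set 'I_m}) : V \subset W ->
    (exists2 v, v \in V & kk \in g v) -> exists2 v, v \in W & kk \in g v.
  by move=> sVW [v vV kv]; exists v; first exact: (subsetP sVW).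
split=> [kk | K]; first exact/span_dg_ideal/Ik_up.
apply: span_dg_ideal => V W sVW [kk kK /Ik_basis_divisible kV]; exists kk => //.
exact/span_basis/(Ik_up kk _ _ sVW).
Qed.
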